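(* Let $f$, $g$, $\xi$, $F$ satisfy the standing assumptions below (except that $\lim_{x\to0^+}F(x)=+\infty$ is not assumed separately), and let $x$ be the unique continuous solution of $x'(t)=-f(x(t))+g(t)$, $t>0$, $x(0)=\xi$. Suppose that either $f\in\mathrm{RV}_0(\beta)$ for some $\beta>1$ or $f\circ F^{-1}\in\mathrm{RV}_\infty(-1)$; that there exist $\delta>0$ and a function $\phi$ increasing on $(0,\delta)$ with $\lim_{x\to0^+}f(x)/\phi(x)=1$; that $x(t)\to0$ as $t\to\infty$; and that \[ \lim_{t\to\infty}\frac{g(t)}{f(F^{-1}(t))}=L\in[0,\infty]. \] (i) If $L=0$, then $\lim_{t\to\infty}F(x(t))/t=1$. (ii) If $L\in(0,\infty)$, then $\lim_{t\to\infty}F(x(t))/t=\Lambda_*(L)\in(0,1)$, where (I) if $f\in\mathrm{RV}_0(\beta)$ with $\beta>1$, $\Lambda_*$ is the unique solution in $(0,1)$ of $(1-\Lambda_* )\Lambda_*^{-\beta/(\beta-1)}=L$, and (II) if $f\circ F^{-1}\in\mathrm{RV}_\infty(-1)$, $\Lambda_*=1/(1+L)$. (iii) If $L=\infty$, then $\lim_{t\to\infty}F(x(t))/t=0$.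
   Context: Standing assumptions: $f\in C(\mathbb{R};\mathbb{R})$ is locally Lipschitz continuous on $\mathbb{R}$, $f(0)=0$ and $xf(x)>0$ for $x\neq0$; $g\in C([0,\infty);\mathbb{R})$ with $g(t)>0$ for $t>0$; $\xi>0$. $F(x)=\int_x^1 \frac{du}{f(u)}$ for $x>0$; $F$ is strictly decreasing with inverse $F^{-1}$, and (as needed for $F^{-1}(t)$ to be defined for all large $t$ and tend to $0$) $F(x)\to+\infty$ as $x\to0^+$. $\mathrm{RV}_0(\beta)$: measurable positive $\varphi$ on $(0,\infty)$ with $\varphi(\lambda x)/\varphi(x)\to\lambda^\beta$ as $x\to0^+$ for every $\lambda>0$. $\mathrm{RV}_\infty(\alpha)$: measurable positive $h$ with $h(\lambda t)/h(t)\to\lambda^\alpha$ as $t\to\infty$ for every $\lambda>0$. *)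

From Stdlib Require Import Reals Lra.
Open Scope R_scope.

Definition lim_right0 (phi : R -> R) (l : R) : Prop :=
  forall eps, 0 < eps -> exists d, 0 < d /\
    forall x, 0 < x < d -> Rabs (phi x - l) < eps.

Definition lim_infty (h : R -> R) (l : R) : Prop :=
  forall eps, 0 < eps -> exists T, forall t, T < t -> Rabs (h t - l) < eps.

Definition lim_infty_pinf (h : R -> R) : Prop :=
  forall M, exists T, forall t, T < t -> M < h t.

(* RV_0(beta): positive on (0,oo), phi(lam x)/phi(x) -> lam^beta as x -> 0+.
   (Measurability omitted: all functions to which it is applied here are continuous.) *)
Definition RV0 (beta : R) (phi : R -> R) : Prop :=
  (forall x, 0 < x -> 0 < phi x) /\
  forall lam, 0 < lam -> lim_right0 (fun x => phi (lam * x) / phi x) (Rpower lam beta).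

Definition RVinf (alpha : R) (h : R -> R) : Prop :=
  (forall t, 0 < t -> 0 < h t) /\
  forall lam, 0 < lam -> lim_infty (fun t => h (lam * t) / h t) (Rpower lam alpha).

Definition loc_lipschitz (f : R -> R) : Prop :=
  forall a b, exists K, forall u v, a <= u <= b -> a <= v <= b ->
    Rabs (f u - f v) <= K * Rabs (u - v).

Definition is_F (f F : R -> R) : Prop :=
  forall x, 0 < x -> forall pr : Riemann_integrable (fun u => / f u) x 1,
    F x = RiemannInt pr.

(* Put [u(t) = F(x(t))], [h = f o Finv] and [r = g / h].  Since [F' = - 1/f] and
   [Finv (u t) = x t], the function [u] solves
        u'(t) = 1 - r(t) h(t) / h(u(t)),        u(t) -> +oo,
   so the theorem is a statement about the growth rate [u(t)/t].  In both cases
   (I) and (II), [h] is regularly varying at infinity with index [-p]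
   ([p = beta/(beta-1)] in case (I), [p = 1] in case (II)), and [h] is almost
   decreasing because [f] is asymptotic to a nondecreasing function.  Then
   [h(t)/h(theta t) ~ theta^p], and a barrier argument on [u(t) - theta t] shows
   that [u(t)/t] is eventually above [theta] when [theta + L theta^p < 1] and below
   it when [theta + L theta^p > 1], where [L = lim r]; hence [u(t)/t -> Lam] with
   [Lam + L Lam^p = 1] (and [u(t)/t -> 0] when [L = +oo]). *)

From Stdlib Require Import Reals Lra.
From Coquelicot Require Import Coquelicot.
Open Scope R_scope.

Definition ultimately (P : R -> Prop) : Prop := exists T, forall t, T < t -> P t.

Lemma ultimately_and (P Q : R -> Prop) :
  ultimately P -> ultimately Q -> ultimately (fun t => P t /\ Q t).
Proof.
  intros [T1 H1] [T2 H2]. exists (Rmax T1 T2). intros t Ht.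
  pose proof (Rmax_l T1 T2). pose proof (Rmax_r T1 T2).
  split; [apply H1 | apply H2]; lra.
Qed.

Lemma ultimately_mono (P Q : R -> Prop) :
  (forall t, P t -> Q t) -> ultimately P -> ultimately Q.
Proof. intros HPQ [T HT]. exists T. auto. Qed.

Lemma ultimately_gt (a : R) : ultimately (fun t => a < t).
Proof. exists a. auto. Qed.

Lemma lim_infty_squeeze (h : R -> R) (l : R) :
  (forall a, a < l -> ultimately (fun t => a < h t)) ->
  (forall b, l < b -> ultimately (fun t => h t < b)) ->
  lim_infty h l.
Proof.
  intros Hlo Hup eps Heps.
  destruct (ultimately_and _ _ (Hlo (l - eps) ltac:(lra)) (Hup (l + eps) ltac:(lra)))
    as [T HT].
  exists T. intros t Ht. destruct (HT t Ht). apply Rabs_def1; lra.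
Qed.

Lemma lim_infty_lower (h : R -> R) (l a : R) :
  lim_infty h l -> a < l -> ultimately (fun t => a < h t).
Proof.
  intros H Ha. destruct (H (l - a) ltac:(lra)) as [T HT].
  exists T. intros t Ht. specialize (HT t Ht). apply Rabs_def2 in HT. lra.
Qed.

Lemma lim_infty_upper (h : R -> R) (l b : R) :
  lim_infty h l -> l < b -> ultimately (fun t => h t < b).
Proof.
  intros H Hb. destruct (H (b - l) ltac:(lra)) as [T HT].
  exists T. intros t Ht. specialize (HT t Ht). apply Rabs_def2 in HT. lra.
Qed.

Lemma lim_infty_unique (h : R -> R) (a b : R) :
  lim_infty h a -> lim_infty h b -> a = b.
Proof.
  intros Ha Hb. destruct (Rtotal_order a b) as [Hab | [Hab | Hab]]; auto; exfalso.
  - destruct (ultimately_and _ _ (lim_infty_upper h a ((a + b) / 2) Ha ltac:(lra))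
      (lim_infty_lower h b ((a + b) / 2) Hb ltac:(lra))) as [T HT].
    destruct (HT (T + 1) ltac:(lra)). lra.
  - destruct (ultimately_and _ _ (lim_infty_lower h a ((a + b) / 2) Ha ltac:(lra))
      (lim_infty_upper h b ((a + b) / 2) Hb ltac:(lra))) as [T HT].
    destruct (HT (T + 1) ltac:(lra)). lra.
Qed.

Definition tends_to_0plus (y : R -> R) : Prop :=
  forall d, 0 < d -> ultimately (fun t => 0 < y t < d).

Lemma lim_right0_comp (phi y : R -> R) (l : R) :
  lim_right0 phi l -> tends_to_0plus y -> lim_infty (fun t => phi (y t)) l.
Proof.
  intros Hphi Hy eps Heps. destruct (Hphi eps Heps) as [d [Hd Hphid]].
  apply (ultimately_mono _ _ (fun t Ht => Hphid (y t) Ht)). apply Hy; auto.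
Qed.

Lemma lim_infty_ext (h k : R -> R) (l : R) :
  ultimately (fun t => h t = k t) -> lim_infty h l -> lim_infty k l.
Proof.
  intros Heq Hh eps Heps.
  destruct (ultimately_and _ _ Heq (Hh eps Heps)) as [T HT].
  exists T. intros t Ht. destruct (HT t Ht) as [<- ?]. auto.
Qed.

Lemma Rdiv_lt_iff (a b c : R) : 0 < b -> (a / b < c <-> a < c * b).
Proof.
  intros Hb. split; intro H.
  - apply (Rmult_lt_compat_r b) in H; auto. unfold Rdiv in H.
    rewrite Rmult_assoc, Rinv_l, Rmult_1_r in H; lra.
  - apply (Rmult_lt_reg_r b); auto. unfold Rdiv.
    rewrite Rmult_assoc, Rinv_l, Rmult_1_r; lra.
Qed.

Lemma Rlt_div_iff (a b c : R) : 0 < b -> (c < a / b <-> c * b < a).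
Proof.
  intros Hb. split; intro H.
  - apply (Rmult_lt_compat_r b) in H; auto. unfold Rdiv in H.
    rewrite Rmult_assoc, Rinv_l, Rmult_1_r in H; lra.
  - apply (Rmult_lt_reg_r b); auto. unfold Rdiv.
    rewrite Rmult_assoc, Rinv_l, Rmult_1_r; lra.
Qed.

Lemma Rpower_pos (a p : R) : 0 < Rpower a p.
Proof. apply exp_pos. Qed.

Lemma Rpower_root (m p : R) : 0 < m -> 0 < p -> Rpower (Rpower m (/ p)) p = m.
Proof.
  intros Hm Hp. rewrite Rpower_mult, Rinv_l by lra. apply Rpower_1; auto.
Qed.

Lemma Rpower_lt_base (a b p : R) :
  0 < p -> 0 < a -> 0 < b -> Rpower a p < Rpower b p -> a < b.
Proof.
  intros Hp Ha Hb H. destruct (Rlt_or_le a b) as [|Hba]; auto.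
  assert (Rpower b p <= Rpower a p) by (apply Rle_Rpower_l; lra). lra.
Qed.

Lemma Rpower_2_inj (a b : R) : Rpower 2 a = Rpower 2 b -> a = b.
Proof.
  unfold Rpower. intros H. apply exp_inv in H.
  assert (0 < ln 2) by (rewrite <- ln_1; apply ln_increasing; lra).
  apply (Rmult_eq_reg_r (ln 2)); lra.
Qed.

Lemma derivable_pt_lim_linear (a t : R) : derivable_pt_lim (fun s => a * s) t a.
Proof.
  pose proof (derivable_pt_lim_scal id a t 1 (derivable_pt_lim_id t)) as H.
  rewrite Rmult_1_r in H. exact H.
Qed.

Lemma nonincreasing_of_deriv (K K' : R -> R) (a b : R) : a <= b ->
  (forall c, a <= c <= b -> derivable_pt_lim K c (K' c)) ->
  (forall c, a < c < b -> K' c <= 0) -> K b <= K a.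
Proof.
  intros Hab HD Hneg. destruct (Req_dec a b) as [<- | Hne]; [lra |].
  destruct (MVT_cor2 K K' a b) as [c [Hc1 Hc2]]; [lra | auto |].
  specialize (Hneg c Hc2). nra.
Qed.

Lemma decreasing_of_deriv (K K' : R -> R) (a b : R) : a < b ->
  (forall c, a <= c <= b -> derivable_pt_lim K c (K' c)) ->
  (forall c, a < c < b -> K' c < 0) -> K b < K a.
Proof.
  intros Hab HD Hneg.
  destruct (MVT_cor2 K K' a b) as [c [Hc1 Hc2]]; [lra | auto |].
  specialize (Hneg c Hc2). nra.
Qed.

Lemma deriv_continuity (w : R -> R) (c l : R) : derivable_pt_lim w c l ->
  forall eps, 0 < eps -> exists d, 0 < d /\ forall s, Rabs (s - c) < d -> Rabs (w s - w c) < eps.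
Proof.
  intros Hder eps Heps.
  assert (Hc : continuity_pt w c) by (apply derivable_continuous_pt; exists l; exact Hder).
  destruct (Hc eps Heps) as [d [Hd Hwd]]. exists d; split; auto.
  intros s Hs. destruct (Req_dec s c) as [-> | Hne].
  - rewrite Rminus_diag, Rabs_R0; auto.
  - apply Hwd. repeat split; auto.
Qed.

Lemma below_left_of_deriv_pos (w : R -> R) (c l : R) :
  derivable_pt_lim w c l -> 0 < l ->
  exists d, 0 < d /\ forall s, c - d < s < c -> w s < w c.
Proof.
  intros Hder Hl. destruct (Hder l Hl) as [d Hd]. exists d. split; [apply cond_pos |].
  intros s Hs. assert (Hsc : s - c < 0) by lra.
  specialize (Hd (s - c) ltac:(lra) ltac:(rewrite Rabs_left; lra)).
  replace (c + (s - c)) with s in Hd by ring. apply Rabs_def2 in Hd.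
  assert (Hq : 0 < (w s - w c) / (s - c)) by lra.
  assert (E : w s - w c = (w s - w c) / (s - c) * (s - c)) by (field; lra).
  nra.
Qed.

(* A function positive at [a] stays positive on [[a, b]] if its derivative is
   positive wherever the function is nonpositive: at the first nonpositive point
   the function would have to be decreasing towards it. *)
Lemma positivity_persists (w w' : R -> R) (a b : R) : a <= b ->
  (forall c, a <= c <= b -> derivable_pt_lim w c (w' c)) -> 0 < w a ->
  (forall c, a < c <= b -> w c <= 0 -> 0 < w' c) -> 0 < w b.
Proof.
  intros Hab HD Ha Hpos. apply Rnot_le_lt. intro Hb.
  (* [c] is the infimum of the points of [[a, b]] where [w] is nonpositive. *)
  set (Z := fun s => a <= s <= b /\ w s <= 0).
  set (LB := fun y => forall s, Z s -> y <= s).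
  assert (HZb : Z b) by (split; lra).
  destruct (completeness LB) as [c [Hub Hlub]].
  { exists b. intros y Hy. apply Hy, HZb. }
  { exists a. intros s [Hs _]. lra. }
  assert (Hc_lb : LB c) by (intros s Hs; apply Hlub; intros y Hy; apply Hy, Hs).
  assert (Hac : a <= c) by (apply Hub; intros s [Hs _]; lra).
  assert (Hcb : c <= b) by (apply Hc_lb, HZb).
  assert (Hwc : w c <= 0).
  { apply Rnot_lt_le. intro Hwc.
    destruct (deriv_continuity w c (w' c) (HD c (conj Hac Hcb)) (w c) Hwc)
      as [d [Hd Hcont]].
    assert (Hgap : LB (c + d / 2)).
    { intros s Hs. pose proof (Hc_lb s Hs). destruct Hs as [_ Hs].
      apply Rnot_lt_le. intro Hsd.
      specialize (Hcont s ltac:(apply Rabs_def1; lra)). apply Rabs_def2 in Hcont. lra. }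
    specialize (Hub _ Hgap). lra. }
  assert (Hac' : a < c) by (destruct (Req_dec a c) as [<- |]; lra).
  destruct (below_left_of_deriv_pos w c (w' c) (HD c (conj Hac Hcb))
              (Hpos c (conj Hac' Hcb) Hwc)) as [d [Hd Hleft]].
  set (s := Rmax a (c - d / 2)).
  assert (Hs : a <= s /\ c - d / 2 <= s) by (split; [apply Rmax_l | apply Rmax_r]).
  assert (Hsc : s < c) by (apply Rmax_lub_lt; lra).
  specialize (Hleft s ltac:(lra)).
  specialize (Hc_lb s ltac:(split; lra)). lra.
Qed.

Lemma barrier (w w' : R -> R) (T eta : R) : 0 < eta ->
  (forall t, T < t -> derivable_pt_lim w t (w' t)) ->
  (forall t, T < t -> w t <= 0 -> eta <= w' t) ->
  ultimately (fun t => 0 < w t).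
Proof.
  intros Heta HD Hw.
  (* a first positive value, at [t1], via the mean value theorem on [[t0, t1]] *)
  set (t0 := T + 1). set (t1 := t0 + Rabs (w t0) / eta + 1).
  assert (Hlen : t1 - t0 >= Rabs (w t0) / eta + 1) by (unfold t1; lra).
  assert (Hdiv : 0 <= Rabs (w t0) / eta)
    by (apply Rmult_le_pos; [apply Rabs_pos | left; apply Rinv_0_lt_compat; lra]).
  assert (Ht1 : 0 < w t1).
  { destruct (MVT_cor2 w w' t0 t1) as [c [Hc Hct]];
      [unfold t1; lra | intros c Hc; apply HD; unfold t0 in *; lra |].
    destruct (Rle_or_lt (w c) 0) as [Hwc | Hwc].
    - assert (Hwc' : eta <= w' c) by (apply Hw; unfold t0 in *; lra).
      assert (eta * (Rabs (w t0) / eta) = Rabs (w t0)) by (field; lra).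
      pose proof (Rle_abs (- w t0)). rewrite Rabs_Ropp in *. nra.
    - apply (positivity_persists w w' c t1); try lra.
      + intros s Hs. apply HD. unfold t0 in *; lra.
      + intros s Hs Hws. pose proof (Hw s ltac:(unfold t0 in *; lra) Hws). lra. }
  exists t1. intros t Ht. apply (positivity_persists w w' t1 t); try lra.
  - intros s Hs. apply HD. unfold t1, t0 in *; lra.
  - intros s Hs Hws. pose proof (Hw s ltac:(unfold t1, t0 in *; lra) Hws). lra.
Qed.

(** * The primitive [F] of [1/f] and its inverse *)

Section Primitive.

Variables f F : R -> R.
Hypothesis Hfc : continuity f.
Hypothesis Hfpos : forall u, 0 < u -> 0 < f u.
Hypothesis HF : is_F f F.

Lemma F_derivative (y : R) : 0 < y -> derivable_pt_lim F y (- / f y).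
Proof.
  intros Hy.
  assert (Hcont : forall z, 0 < z -> continuous (fun u => / f u) z).
  { intros z Hz. apply continuity_pt_filterlim, continuity_pt_inv.
    - apply Hfc.
    - apply Rgt_not_eq, Hfpos; auto. }
  assert (Hex : forall a, 0 < a -> ex_RInt (fun u => / f u) a 1).
  { intros a Ha. apply (@ex_RInt_continuous R_CompleteNormedModule).
    intros z Hz. apply Hcont.
    assert (0 < Rmin a 1) by (apply Rmin_glb_lt; lra). lra. }
  assert (HRInt : forall a, 0 < a -> F a = RInt (fun u => / f u) a 1).
  { intros a Ha. rewrite (HF a Ha (ex_RInt_Reals_0 _ _ _ (Hex a Ha))).
    symmetry. apply RInt_Reals. }
  apply is_derive_Reals.
  apply (is_derive_ext_loc (fun a => RInt (fun u => / f u) a 1)).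
  { exists (mkposreal y Hy). intros a Ha.
    change (Rabs (a - y) < y) in Ha. apply Rabs_def2 in Ha. rewrite HRInt; auto; lra. }
  apply (is_derive_RInt' (fun u => / f u) _ _ 1); [| apply Hcont; auto].
  exists (mkposreal y Hy). intros a Ha.
  change (Rabs (a - y) < y) in Ha. apply Rabs_def2 in Ha.
  apply (@RInt_correct R_CompleteNormedModule), Hex. lra.
Qed.

Lemma F_decreasing (a b : R) : 0 < a -> a < b -> F b < F a.
Proof.
  intros Ha Hab. apply (decreasing_of_deriv F (fun y => - / f y) a b Hab).
  - intros c Hc. apply F_derivative. lra.
  - intros c Hc. assert (0 < / f c) by (apply Rinv_0_lt_compat, Hfpos; lra). lra.
Qed.

End Primitive.

Section Inverse.

Variables F Finv : R -> R.
Hypothesis HFdec : forall a b, 0 < a -> a < b -> F b < F a.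
Hypothesis HFinv : forall t, 0 <= t -> 0 < Finv t /\ F (Finv t) = t.

Lemma F_monotone (a b : R) : 0 < a -> a <= b -> F b <= F a.
Proof. intros Ha [Hab | <-]; [left; apply HFdec | right]; auto. Qed.

(* Since [F] takes every value [t >= 0], [F] blows up at [0+]. *)
Lemma F_blowup (M : R) : exists d, 0 < d /\ forall y, 0 < y < d -> M < F y.
Proof.
  set (t := Rmax M 0 + 1). pose proof (Rmax_l M 0). pose proof (Rmax_r M 0).
  destruct (HFinv t ltac:(unfold t; lra)) as [Hpos Ht].
  exists (Finv t). split; auto. intros y Hy.
  pose proof (HFdec y (Finv t) (proj1 Hy) (proj2 Hy)). unfold t in *; lra.
Qed.

Lemma Finv_F (y : R) : 0 < y -> 0 <= F y -> Finv (F y) = y.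
Proof.
  intros Hy HFy. destruct (HFinv (F y) HFy) as [Hpos HFF].
  destruct (Rtotal_order (Finv (F y)) y) as [Hlt | [Heq | Hgt]]; auto.
  - pose proof (HFdec _ _ Hpos Hlt). lra.
  - pose proof (HFdec _ _ Hy Hgt). lra.
Qed.

Lemma Finv_lt (y s : R) : 0 < y -> 0 <= s -> F y < s -> Finv s < y.
Proof.
  intros Hy Hs HFs. destruct (HFinv s Hs) as [Hpos HFF].
  apply Rnot_le_lt. intro Hle. pose proof (F_monotone y (Finv s) Hy Hle). lra.
Qed.

Lemma Finv_nonincreasing (s s' : R) : 0 <= s -> s <= s' -> Finv s' <= Finv s.
Proof.
  intros Hs Hss'. destruct (HFinv s Hs) as [Hpos HFs].
  destruct (HFinv s' ltac:(lra)) as [Hpos' HFs'].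
  apply Rnot_lt_le. intro Hlt. pose proof (HFdec _ _ Hpos Hlt). lra.
Qed.

Lemma Finv_tends_to_0plus : tends_to_0plus Finv.
Proof.
  intros d Hd. exists (Rmax (F d) 0). intros t Ht.
  pose proof (Rmax_l (F d) 0). pose proof (Rmax_r (F d) 0).
  split; [apply HFinv; lra | apply Finv_lt; lra].
Qed.

End Inverse.

(** * Almost monotone functions *)

Definition almost_increasing_0 (f : R -> R) : Prop :=
  forall k, 1 < k -> exists y0, 0 < y0 /\
    forall y y', 0 < y -> y <= y' -> y' < y0 -> f y <= k * f y'.

Definition almost_decreasing (h : R -> R) : Prop :=
  forall k, 1 < k -> exists S, forall s s', S <= s -> s <= s' -> h s' <= k * h s.

Lemma pos_of_div_pos (a b : R) : 0 < a -> 0 < a / b -> 0 < b.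
Proof.
  intros Ha Hab. destruct (Rtotal_order b 0) as [Hb | [Hb | Hb]]; auto.
  - assert (/ b < 0) by (apply Rinv_lt_0_compat; auto).
    unfold Rdiv in Hab. nra.
  - unfold Rdiv in Hab. rewrite Hb, Rinv_0, Rmult_0_r in Hab. lra.
Qed.

Lemma almost_increasing_of_equiv (f phi : R -> R) (delta : R) :
  (forall u, 0 < u -> 0 < f u) -> 0 < delta ->
  (forall u v, 0 < u -> u <= v -> v < delta -> phi u <= phi v) ->
  lim_right0 (fun u => f u / phi u) 1 -> almost_increasing_0 f.
Proof.
  intros Hf Hdelta Hphi Hfphi k Hk.
  set (e := (k - 1) / (k + 1)).
  assert (Hke : k * (1 - e) = 1 + e) by (unfold e; field; lra).
  assert (He : 0 < e < 1).
  { unfold e. split; [apply Rdiv_lt_0_compat | apply Rdiv_lt_iff]; lra. }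
  destruct (Hfphi e ltac:(lra)) as [d [Hd Hfphid]].
  exists (Rmin d delta). split; [apply Rmin_glb_lt; lra |].
  intros y y' Hy Hyy' Hy'. pose proof (Rmin_l d delta). pose proof (Rmin_r d delta).
  assert (H1 := Hfphid y ltac:(lra)). assert (H2 := Hfphid y' ltac:(lra)).
  apply Rabs_def2 in H1. apply Rabs_def2 in H2.
  assert (Hphiy : 0 < phi y) by (apply (pos_of_div_pos (f y)); [apply Hf |]; lra).
  assert (Hphiy' : 0 < phi y') by (apply (pos_of_div_pos (f y')); [apply Hf |]; lra).
  assert (Hup : f y < (1 + e) * phi y) by (apply Rdiv_lt_iff; lra).
  assert (Hlo : (1 - e) * phi y' < f y') by (apply Rlt_div_iff; lra).
  assert (Hmono : phi y <= phi y') by (apply Hphi; lra).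
  nra.
Qed.

Lemma almost_decreasing_comp (f y : R -> R) :
  almost_increasing_0 f ->
  (forall s s', 0 <= s -> s <= s' -> y s' <= y s) -> tends_to_0plus y ->
  almost_decreasing (fun s => f (y s)).
Proof.
  intros Hf Hy Hy0 k Hk. destruct (Hf k Hk) as [y0 [Hy0pos Hfk]].
  destruct (Hy0 y0 Hy0pos) as [T HT].
  exists (Rmax T 0 + 1). intros s s' Hs Hss'.
  pose proof (Rmax_l T 0). pose proof (Rmax_r T 0).
  destruct (HT s ltac:(lra)) as [_ Hys]. destruct (HT s' ltac:(lra)) as [Hys' _].
  apply Hfk; [| apply Hy |]; lra.
Qed.

(** * L'Hopital's rule at [0+] *)

Lemma lim_right0_ext (phi psi : R -> R) (l : R) :
  (forall y, 0 < y -> phi y = psi y) -> lim_right0 phi l -> lim_right0 psi l.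
Proof.
  intros Heq Hphi eps Heps. destruct (Hphi eps Heps) as [d [Hd Hphid]].
  exists d. split; auto. intros y Hy. rewrite <- Heq by lra. auto.
Qed.

Lemma lim_right0_scal (phi : R -> R) (c l : R) :
  lim_right0 phi l -> lim_right0 (fun y => c * phi y) (c * l).
Proof.
  intros Hphi eps Heps. pose proof (Rabs_pos c).
  destruct (Hphi (eps / (Rabs c + 1))) as [d [Hd Hphid]];
    [apply Rdiv_lt_0_compat; lra |].
  exists d. split; auto. intros y Hy.
  rewrite <- Rmult_minus_distr_l, Rabs_mult.
  specialize (Hphid y Hy). apply Rlt_div_iff in Hphid; [| lra].
  pose proof (Rabs_pos (phi y - l)). nra.
Qed.

Lemma deriv_comparison (K K' B B' : R -> R) (eps y y1 : R) : y <= y1 ->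
  (forall z, y <= z <= y1 -> derivable_pt_lim K z (K' z) /\ derivable_pt_lim B z (B' z)) ->
  (forall z, y < z < y1 -> Rabs (K' z) <= - eps * B' z) ->
  Rabs (K y - K y1) <= eps * (B y - B y1).
Proof.
  intros Hyy1 HD Hbound.
  assert (Hup : K y1 + eps * B y1 <= K y + eps * B y).
  { apply (nonincreasing_of_deriv (fun z => K z + eps * B z)
             (fun z => K' z + eps * B' z)); auto.
    - intros z Hz. destruct (HD z Hz).
      apply derivable_pt_lim_plus; [| apply derivable_pt_lim_scal]; auto.
    - intros z Hz. pose proof (Hbound z Hz). pose proof (Rle_abs (K' z)). lra. }
  assert (Hlo : - (K y1 - eps * B y1) <= - (K y - eps * B y)).
  { apply (nonincreasing_of_deriv (fun z => - (K z - eps * B z))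
             (fun z => - (K' z - eps * B' z))); auto.
    - intros z Hz. destruct (HD z Hz). apply derivable_pt_lim_opp.
      apply derivable_pt_lim_minus; [| apply derivable_pt_lim_scal]; auto.
    - intros z Hz. pose proof (Hbound z Hz).
      pose proof (Rle_abs (- K' z)). rewrite Rabs_Ropp in *. lra. }
  apply Rabs_le. lra.
Qed.

Lemma lhopital_0plus (A A' B B' : R -> R) (d l : R) : 0 < d ->
  (forall y, 0 < y < d -> derivable_pt_lim A y (A' y) /\ derivable_pt_lim B y (B' y)) ->
  (forall y, 0 < y < d -> B' y < 0) ->
  (forall M, exists e, 0 < e /\ forall y, 0 < y < e -> M < B y) ->
  lim_right0 (fun y => A' y / B' y) l -> lim_right0 (fun y => A y / B y) l.
Proof.
  intros Hd HD HB' HB Hlim eps Heps.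
  set (K := fun y => A y - l * B y).
  destruct (Hlim (eps / 2) ltac:(lra)) as [d1 [Hd1 Hlim1]].
  set (y1 := Rmin d d1 / 2).
  assert (Hy1 : 0 < y1 /\ y1 < d /\ y1 < d1).
  { pose proof (Rmin_l d d1). pose proof (Rmin_r d d1).
    assert (0 < Rmin d d1) by (apply Rmin_glb_lt; lra). unfold y1; lra. }
  assert (Hosc : forall y, 0 < y <= y1 -> Rabs (K y - K y1) <= eps / 2 * (B y - B y1)).
  { intros y Hy. apply (deriv_comparison K (fun z => A' z - l * B' z) B B'); try lra.
    - intros z Hz. destruct (HD z ltac:(lra)). split; auto.
      apply derivable_pt_lim_minus, derivable_pt_lim_scal; auto.
    - intros z Hz. specialize (HB' z ltac:(lra)).
      specialize (Hlim1 z ltac:(lra)). cbv beta in Hlim1.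
      replace (A' z - l * B' z) with (- B' z * - (A' z / B' z - l)) by (field; lra).
      rewrite Rabs_mult, (Rabs_right (- B' z)), Rabs_Ropp by lra. nra. }
  set (C := Rabs (K y1) + eps / 2 * Rabs (B y1)).
  assert (HC : 0 <= C)
    by (pose proof (Rabs_pos (K y1)); pose proof (Rabs_pos (B y1)); unfold C; nra).
  destruct (HB (2 * C / eps)) as [e [He HBe]].
  exists (Rmin e y1). split; [apply Rmin_glb_lt; lra |].
  intros y Hy. pose proof (Rmin_l e y1). pose proof (Rmin_r e y1).
  specialize (Hosc y ltac:(lra)). specialize (HBe y ltac:(lra)).
  apply Rdiv_lt_iff in HBe; [| lra].
  assert (HBy : 0 < B y) by nra.
  replace (A y / B y - l) with (K y / B y) by (unfold K; field; lra).
  unfold Rdiv. rewrite Rabs_mult, Rabs_inv, (Rabs_right (B y)) by lra.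
  apply Rdiv_lt_iff; [lra |].
  pose proof (Rabs_triang (K y - K y1) (K y1)). replace (K y - K y1 + K y1) with (K y) in * by ring.
  pose proof (Rle_abs (B y1)). pose proof (Rle_abs (- B y1)). rewrite Rabs_Ropp in *.
  unfold C in *. nra.
Qed.

(** * Regular variation of [F], of its inverse and of [f o Finv] *)

Section RegularVariation.

Variables f F Finv : R -> R.
Hypothesis Hfpos : forall u, 0 < u -> 0 < f u.
Hypothesis HFder : forall y, 0 < y -> derivable_pt_lim F y (- / f y).
Hypothesis HFdec : forall a b, 0 < a -> a < b -> F b < F a.
Hypothesis HFinv : forall t, 0 <= t -> 0 < Finv t /\ F (Finv t) = t.

(* If [f] is regularly varying with index [beta] at [0+], then by L'Hopital's
   rule [F y / F (mu y)] tends to [mu^(beta-1)]. *)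
Lemma F_ratio_limit (beta mu : R) : 0 < mu ->
  lim_right0 (fun y => f (mu * y) / f y) (Rpower mu beta) ->
  lim_right0 (fun y => F y / F (mu * y)) (Rpower mu (beta - 1)).
Proof.
  intros Hmu Hf.
  apply (lhopital_0plus F (fun y => - / f y) (fun y => F (mu * y))
           (fun y => - / f (mu * y) * mu) 1); [lra | | | |].
  - intros y Hy. split; [apply HFder; lra |].
    apply (derivable_pt_lim_comp (fun y => mu * y) F);
      [apply derivable_pt_lim_linear | apply HFder; nra].
  - intros y Hy. assert (0 < / f (mu * y)) by (apply Rinv_0_lt_compat, Hfpos; nra). nra.
  - intros M. destruct (F_blowup F Finv HFdec HFinv M) as [d [Hd HFd]].
    exists (d / mu). split; [apply Rdiv_lt_0_compat; lra |].
    intros y Hy. apply HFd. pose proof (proj1 (Rlt_div_iff d mu y Hmu) (proj2 Hy)). nra.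
  - replace (Rpower mu (beta - 1)) with (/ mu * Rpower mu beta).
    + apply (lim_right0_ext (fun y => / mu * (f (mu * y) / f y))).
      * intros y Hy. pose proof (Hfpos y Hy). pose proof (Hfpos (mu * y) ltac:(nra)).
        field. repeat split; lra.
      * apply lim_right0_scal; auto.
    + unfold Rminus. rewrite Rpower_plus, Rpower_Ropp, Rpower_1 by lra. ring.
Qed.

Lemma F_scaled_Finv_pos (mu : R) : 0 < mu -> ultimately (fun t => 0 < F (mu * Finv t)).
Proof.
  intros Hmu. destruct (F_blowup F Finv HFdec HFinv 0) as [d [Hd HFd]].
  apply (ultimately_mono (fun t => 0 < Finv t < d / mu)).
  - intros t Ht. apply HFd. pose proof (proj1 (Rlt_div_iff d mu _ Hmu) (proj2 Ht)). nra.
  - apply (Finv_tends_to_0plus F Finv HFdec HFinv). apply Rdiv_lt_0_compat; lra.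
Qed.

Lemma F_scaled_Finv_limit (beta mu : R) :
  lim_right0 (fun y => F y / F (mu * y)) (Rpower mu (beta - 1)) ->
  lim_infty (fun t => t / F (mu * Finv t)) (Rpower mu (beta - 1)).
Proof.
  intros Hlim. apply (lim_infty_ext (fun t => F (Finv t) / F (mu * Finv t))).
  - exists 0. intros t Ht. rewrite (proj2 (HFinv t ltac:(lra))). reflexivity.
  - apply (lim_right0_comp (fun y => F y / F (mu * y))); auto.
    apply (Finv_tends_to_0plus F Finv HFdec HFinv).
Qed.

(* Comparing [F (mu Finv t)] with [lam t = F (Finv (lam t))]: if
   [mu^(beta-1) < 1/lam] then eventually [mu Finv t < Finv (lam t)]. *)
Lemma Finv_ratio_lower (beta lam mu : R) : 0 < lam -> 0 < mu ->
  lim_right0 (fun y => F y / F (mu * y)) (Rpower mu (beta - 1)) ->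
  Rpower mu (beta - 1) < / lam ->
  ultimately (fun t => mu < Finv (lam * t) / Finv t).
Proof.
  intros Hl Hmu HFrv Hlt.
  destruct (ultimately_and _ _ (ultimately_and _ _ (ultimately_gt 0) (F_scaled_Finv_pos mu Hmu))
    (lim_infty_upper _ _ _ (F_scaled_Finv_limit beta mu HFrv) Hlt)) as [T HT].
  exists T. intros t Ht. destruct (HT t Ht) as [[Ht0 HFmu] Hrat].
  destruct (HFinv t ltac:(lra)) as [Hy _]. destruct (HFinv (lam * t) ltac:(nra)) as [Hz HFz].
  apply Rdiv_lt_iff in Hrat; [| lra]. apply (Rmult_lt_compat_l lam) in Hrat; [| lra].
  rewrite <- Rmult_assoc, Rinv_r, Rmult_1_l in Hrat by lra.
  apply Rlt_div_iff; [lra |]. apply Rnot_le_lt. intro Hle.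
  pose proof (F_monotone F HFdec _ _ Hz Hle). lra.
Qed.

Lemma Finv_ratio_upper (beta lam mu : R) : 0 < lam -> 0 < mu ->
  lim_right0 (fun y => F y / F (mu * y)) (Rpower mu (beta - 1)) ->
  / lam < Rpower mu (beta - 1) ->
  ultimately (fun t => Finv (lam * t) / Finv t < mu).
Proof.
  intros Hl Hmu HFrv Hlt.
  destruct (ultimately_and _ _ (ultimately_and _ _ (ultimately_gt 0) (F_scaled_Finv_pos mu Hmu))
    (lim_infty_lower _ _ _ (F_scaled_Finv_limit beta mu HFrv) Hlt)) as [T HT].
  exists T. intros t Ht. destruct (HT t Ht) as [[Ht0 HFmu] Hrat].
  destruct (HFinv t ltac:(lra)) as [Hy _]. destruct (HFinv (lam * t) ltac:(nra)) as [Hz HFz].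
  apply Rlt_div_iff in Hrat; [| lra]. apply (Rmult_lt_compat_l lam) in Hrat; [| lra].
  rewrite <- Rmult_assoc, Rinv_r, Rmult_1_l in Hrat by lra.
  apply Rdiv_lt_iff; [lra |]. apply Rnot_le_lt. intro Hle.
  pose proof (F_monotone F HFdec (mu * Finv t) _ ltac:(nra) Hle). lra.
Qed.

Lemma Finv_regular_variation (beta lam : R) : 1 < beta -> 0 < lam ->
  (forall mu, 0 < mu -> lim_right0 (fun y => F y / F (mu * y)) (Rpower mu (beta - 1))) ->
  lim_infty (fun t => Finv (lam * t) / Finv t) (Rpower lam (- / (beta - 1))).
Proof.
  intros Hb Hl HFrv. set (mu0 := Rpower lam (- / (beta - 1))).
  assert (Hmu0pos : 0 < mu0) by apply Rpower_pos.
  assert (Hmu0 : Rpower mu0 (beta - 1) = / lam).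
  { unfold mu0. rewrite Rpower_mult.
    replace (- / (beta - 1) * (beta - 1)) with (- (1)) by (field; lra).
    rewrite Rpower_Ropp, Rpower_1; auto. }
  apply lim_infty_squeeze.
  - intros a Ha. destruct (Rle_or_lt a 0) as [Ha0 | Ha0].
    + exists 0. intros t Ht.
      destruct (HFinv t ltac:(lra)) as [Hy _]. destruct (HFinv (lam * t) ltac:(nra)) as [Hz _].
      assert (0 < Finv (lam * t) / Finv t) by (apply Rdiv_lt_0_compat; lra). lra.
    + apply (Finv_ratio_lower beta); [lra | lra | apply HFrv; lra |].
      rewrite <- Hmu0. apply Rlt_Rpower_l; lra.
  - intros b Hmu0b. apply (Finv_ratio_upper beta); [lra | lra | apply HFrv; lra |].
    rewrite <- Hmu0. apply Rlt_Rpower_l; lra.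
Qed.

End RegularVariation.

(** * Regularly varying functions at asymptotically proportional arguments *)

(* If [f] is regularly varying at [0+] and almost increasing, then [f (z t) / f (y t)]
   tends to [mu0^beta] whenever [y t -> 0+] and [z t / y t -> mu0]: the almost
   monotonicity replaces the uniform convergence theorem. *)
Section ProportionalArguments.

Variables (f y z : R -> R) (beta mu0 : R).
Hypothesis Hbeta : 0 < beta.
Hypothesis Hmu0 : 0 < mu0.
Hypothesis Hfpos : forall u, 0 < u -> 0 < f u.
Hypothesis Hfrv : forall mu, 0 < mu -> lim_right0 (fun u => f (mu * u) / f u) (Rpower mu beta).
Hypothesis Hfinc : almost_increasing_0 f.
Hypothesis Hy : tends_to_0plus y.
Hypothesis Hzy : lim_infty (fun t => z t / y t) mu0.

Lemma proportional_window (c1 c2 d : R) : c1 < mu0 -> mu0 < c2 -> 0 < d ->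
  ultimately (fun t => 0 < y t /\ c1 * y t < z t < c2 * y t /\ c2 * y t < d).
Proof.
  intros Hc1 Hc2 Hd.
  destruct (ultimately_and _ _ (Hy (d / c2) ltac:(apply Rdiv_lt_0_compat; lra))
    (ultimately_and _ _ (lim_infty_lower _ _ _ Hzy Hc1) (lim_infty_upper _ _ _ Hzy Hc2)))
    as [T HT].
  exists T. intros t Ht. destruct (HT t Ht) as [[Hyt Hyd] [Hlo Hup]].
  apply Rlt_div_iff in Hlo; [| lra]. apply Rdiv_lt_iff in Hup; [| lra].
  apply Rlt_div_iff in Hyd; [| lra]. repeat split; lra.
Qed.

Lemma proportional_ratio_lower (a : R) :
  a < Rpower mu0 beta -> ultimately (fun t => a < f (z t) / f (y t)).
Proof.
  intros Ha. destruct (Rle_or_lt a 0) as [Ha0 | Ha0].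
  - destruct (proportional_window 0 (mu0 + 1) 1) as [T HT]; try lra.
    exists T. intros t Ht. destruct (HT t Ht) as [Hyt [[Hz _] _]].
    assert (0 < f (z t) / f (y t)) by (apply Rdiv_lt_0_compat; apply Hfpos; nra). lra.
  - (* compare with [f (mu1 y)], where [a < m' < m = mu1^beta < mu0^beta] *)
    set (m := (a + Rpower mu0 beta) / 2). set (m' := (a + m) / 2).
    set (mu1 := Rpower m (/ beta)).
    assert (Hmu1 : Rpower mu1 beta = m) by (apply Rpower_root; unfold m; lra).
    assert (Hmu10 : mu1 < mu0)
      by (apply (Rpower_lt_base _ _ beta); try apply Rpower_pos; auto; unfold m in *; lra).
    destruct (Hfinc (m' / a)) as [y0 [Hy0 Hfk]]; [apply Rlt_div_iff; unfold m', m; lra |].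
    pose proof (Rpower_pos m (/ beta)) as Hmu1pos. fold mu1 in Hmu1pos.
    destruct (ultimately_and _ _ (proportional_window mu1 (mu0 + 1) y0 Hmu10 ltac:(lra) Hy0)
      (lim_infty_lower _ _ m' (lim_right0_comp _ _ _ (Hfrv mu1 Hmu1pos) Hy)
         ltac:(unfold m', m in *; lra))) as [T HT].
    exists T. intros t Ht. destruct (HT t Ht) as [[Hyt [[Hz1 Hz2] Hy0t]] Hrat].
    assert (Hcmp : f (mu1 * y t) <= m' / a * f (z t)) by (apply Hfk; nra).
    pose proof (Hfpos (y t) Hyt) as Hfy.
    apply (Rlt_div_iff _ (f (y t))) in Hrat; auto.
    apply (Rlt_div_iff _ (f (y t))); auto.
    assert (m' / a * a = m') by (field; lra).
    assert (0 < m' / a) by (apply Rdiv_lt_0_compat; unfold m', m in *; lra).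
    nra.
Qed.

Lemma proportional_ratio_upper (b : R) :
  Rpower mu0 beta < b -> ultimately (fun t => f (z t) / f (y t) < b).
Proof.
  intros Hb. pose proof (Rpower_pos mu0 beta).
  (* compare with [f (mu2 y)], where [mu0^beta < m = mu2^beta < m' < b] *)
  set (m := (Rpower mu0 beta + b) / 2). set (m' := (m + b) / 2).
  set (mu2 := Rpower m (/ beta)).
  assert (Hmu2 : Rpower mu2 beta = m) by (apply Rpower_root; unfold m; lra).
  assert (Hmu02 : mu0 < mu2)
    by (apply (Rpower_lt_base _ _ beta); try apply Rpower_pos; auto; unfold m in *; lra).
  destruct (Hfinc (b / m')) as [y0 [Hy0 Hfk]]; [apply Rlt_div_iff; unfold m', m; lra |].
  destruct (ultimately_and _ _ (proportional_window (mu0 / 2) mu2 y0 ltac:(lra) Hmu02 Hy0)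
    (lim_infty_upper _ _ m' (lim_right0_comp _ _ _ (Hfrv mu2 ltac:(lra)) Hy)
       ltac:(unfold m', m in *; lra))) as [T HT].
  exists T. intros t Ht. destruct (HT t Ht) as [[Hyt [[Hz1 Hz2] Hy0t]] Hrat].
  assert (Hcmp : f (z t) <= b / m' * f (mu2 * y t)) by (apply Hfk; nra).
  pose proof (Hfpos (y t) Hyt) as Hfy.
  apply (Rdiv_lt_iff _ (f (y t))) in Hrat; auto.
  apply (Rdiv_lt_iff _ (f (y t))); auto.
  assert (b / m' * m' = b) by (field; unfold m', m in *; lra).
  assert (0 < b / m') by (apply Rdiv_lt_0_compat; unfold m', m in *; lra).
  nra.
Qed.

Lemma proportional_ratio_limit :
  lim_infty (fun t => f (z t) / f (y t)) (Rpower mu0 beta).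
Proof.
  apply lim_infty_squeeze; [apply proportional_ratio_lower | apply proportional_ratio_upper].
Qed.

End ProportionalArguments.

Lemma f_Finv_regular_variation (f F Finv : R -> R) (beta : R) : 1 < beta ->
  (forall u, 0 < u -> 0 < f u) ->
  (forall y, 0 < y -> derivable_pt_lim F y (- / f y)) ->
  (forall a b, 0 < a -> a < b -> F b < F a) ->
  (forall t, 0 <= t -> 0 < Finv t /\ F (Finv t) = t) ->
  almost_increasing_0 f -> RV0 beta f ->
  RVinf (- (beta / (beta - 1))) (fun t => f (Finv t)).
Proof.
  intros Hb Hfpos HFder HFdec HFinv Hfinc [_ Hfrv]. split.
  - intros t Ht. apply Hfpos, HFinv. lra.
  - intros lam Hlam.
    replace (Rpower lam (- (beta / (beta - 1))))
      with (Rpower (Rpower lam (- / (beta - 1))) beta)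
      by (rewrite Rpower_mult; f_equal; field; lra).
    apply (proportional_ratio_limit f Finv (fun t => Finv (lam * t))); auto;
      [lra | apply Rpower_pos | apply (Finv_tends_to_0plus F Finv); auto |].
    apply (Finv_regular_variation F Finv); auto.
    intros mu Hmu. apply (F_ratio_limit f F Finv); auto.
Qed.

(** * Asymptotics of solutions of [u' = 1 - r(t) h(t) / h(u)] *)

Lemma small_perturbation (P : R -> R) (c : R) :
  continuity_pt P 0 -> P 0 < c -> exists e, 0 < e /\ P e < c.
Proof.
  intros HP Hc. destruct (HP (c - P 0)) as [d [Hd HPd]]; [lra |].
  exists (d / 2). split; [lra |].
  assert (H : Rabs (P (d / 2) - P 0) < c - P 0).
  { apply HPd. split; [split; [exact I | lra] |].
    simpl. unfold R_dist. rewrite Rminus_0_r, Rabs_right; lra. }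
  apply Rabs_def2 in H. lra.
Qed.

Section Comparison.

Variables u u' r h : R -> R.
Variable p : R.
Hypothesis Hder : ultimately (fun t => derivable_pt_lim u t (u' t)).
Hypothesis Heq : ultimately (fun t => u' t = 1 - r t * h t / h (u t)).
Hypothesis Hu : lim_infty_pinf u.
Hypothesis Hr : ultimately (fun t => 0 <= r t).
Hypothesis Hhpos : forall s, 0 < s -> 0 < h s.
Hypothesis Hhdec : almost_decreasing h.
Hypothesis Hhrv : forall lam, 0 < lam ->
  lim_infty (fun t => h (lam * t) / h t) (Rpower lam (- p)).

Lemma above_line (theta c : R) : 0 < theta -> theta < 1 - c ->
  (exists S, ultimately (fun t => forall v, S <= v <= theta * t -> r t * h t / h v <= c)) ->
  ultimately (fun t => theta * t < u t).
Proof.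
  intros Hth Hc [S HS].
  destruct (ultimately_and _ _ Hder (ultimately_and _ _ Heq (ultimately_and _ _ HS (Hu S))))
    as [T HT].
  destruct (barrier (fun t => u t - theta * t) (fun t => u' t - theta) T (1 - c - theta))
    as [T' HT']; [lra | | |].
  - intros t Ht. apply derivable_pt_lim_minus; [apply HT; auto | apply derivable_pt_lim_linear].
  - intros t Ht Hw. destruct (HT t Ht) as [_ [HE [HSt HuS]]].
    specialize (HSt (u t) ltac:(lra)). rewrite HE. lra.
  - exists T'. intros t Ht. specialize (HT' t Ht). cbv beta in HT'. lra.
Qed.

Lemma below_line (theta c : R) : 0 < theta -> 1 - c < theta ->
  ultimately (fun t => forall v, theta * t <= v -> c <= r t * h t / h v) ->
  ultimately (fun t => u t < theta * t).
Proof.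
  intros Hth Hc HS.
  destruct (ultimately_and _ _ Hder (ultimately_and _ _ Heq HS)) as [T HT].
  destruct (barrier (fun t => theta * t - u t) (fun t => theta - u' t) T (theta - 1 + c))
    as [T' HT']; [lra | | |].
  - intros t Ht. apply derivable_pt_lim_minus; [apply derivable_pt_lim_linear | apply HT; auto].
  - intros t Ht Hw. destruct (HT t Ht) as [_ [HE HSt]].
    specialize (HSt (u t) ltac:(lra)). rewrite HE. lra.
  - exists T'. intros t Ht. specialize (HT' t Ht). cbv beta in HT'. lra.
Qed.

Lemma h_ratio_upper (theta k : R) : 0 < theta -> 1 < k ->
  exists S, ultimately (fun t => forall v, S <= v <= theta * t ->
    h t <= k * k * Rpower theta p * h v).
Proof.
  intros Hth Hk. destruct (Hhdec k Hk) as [S HS]. exists (Rmax S 1).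
  pose proof (Rpower_pos theta p) as Hc. pose proof (Rmax_l S 1). pose proof (Rmax_r S 1).
  assert (Hlt : / (k * Rpower theta p) < Rpower theta (- p)).
  { rewrite Rpower_Ropp. apply Rinv_lt_contravar; nra. }
  destruct (ultimately_and _ _ (ultimately_gt 0)
    (lim_infty_lower _ _ _ (Hhrv theta Hth) Hlt)) as [T HT].
  exists T. intros t Ht v Hv. destruct (HT t Ht) as [Ht0 Hrat].
  pose proof (Hhpos t Ht0). pose proof (Hhpos (theta * t) ltac:(nra)).
  pose proof (Hhpos v ltac:(lra)).
  apply (Rlt_div_iff _ (h t)) in Hrat; auto.
  assert (Hmono : h (theta * t) <= k * h v) by (apply HS; lra).
  assert (E : / (k * Rpower theta p) * h t * (k * Rpower theta p) = h t) by (field; nra).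
  assert (Hht : h t < h (theta * t) * (k * Rpower theta p))
    by (rewrite <- E; apply Rmult_lt_compat_r; nra).
  assert (h (theta * t) * (k * Rpower theta p) <= k * h v * (k * Rpower theta p))
    by (apply Rmult_le_compat_r; nra).
  nra.
Qed.

Lemma h_ratio_lower (theta k : R) : 0 < theta -> 1 < k ->
  ultimately (fun t => forall v, theta * t <= v -> Rpower theta p * h v <= k * k * h t).
Proof.
  intros Hth Hk. destruct (Hhdec k Hk) as [S HS].
  pose proof (Rpower_pos theta p) as Hc.
  assert (Hlt : Rpower theta (- p) < k / Rpower theta p).
  { rewrite Rpower_Ropp. apply Rlt_div_iff; [lra |].
    rewrite Rinv_l by lra. lra. }
  destruct (ultimately_and _ _ (ultimately_gt (Rmax (S / theta) 0))
    (lim_infty_upper _ _ _ (Hhrv theta Hth) Hlt)) as [T HT].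
  exists T. intros t Ht v Hv. destruct (HT t Ht) as [Ht0 Hrat].
  pose proof (Rmax_l (S / theta) 0). pose proof (Rmax_r (S / theta) 0).
  assert (HSt : S < theta * t) by (rewrite Rmult_comm; apply Rdiv_lt_iff; lra).
  pose proof (Hhpos t ltac:(lra)).
  apply (Rdiv_lt_iff _ (h t)) in Hrat; [| lra].
  assert (Hmono : h v <= k * h (theta * t)) by (apply HS; lra).
  assert (E : k / Rpower theta p * h t * Rpower theta p = k * h t) by (field; lra).
  assert (Hth_t : Rpower theta p * h (theta * t) < k * h t).
  { rewrite <- E, (Rmult_comm _ (Rpower theta p)). apply Rmult_lt_compat_l; lra. }
  assert (Rpower theta p * h v <= k * (Rpower theta p * h (theta * t))) by nra.
  nra.
Qed.

Lemma forcing_upper (L theta c : R) : 0 < theta -> lim_infty r L ->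
  L * Rpower theta p < c ->
  exists S, ultimately (fun t => forall v, S <= v <= theta * t -> r t * h t / h v <= c).
Proof.
  intros Hth HrL Hc. pose proof (Rpower_pos theta p) as Hpow.
  destruct (small_perturbation (fun e => (L + e) * ((1 + e) * (1 + e)) * Rpower theta p) c)
    as [e [He Hec]]; [reg | lra |].
  destruct (h_ratio_upper theta (1 + e) Hth ltac:(lra)) as [S HS]. exists (Rmax S 1).
  pose proof (Rmax_l S 1). pose proof (Rmax_r S 1).
  destruct (ultimately_and _ _ (ultimately_and _ _ Hr (ultimately_gt 0))
    (ultimately_and _ _ HS (lim_infty_upper _ _ (L + e) HrL ltac:(lra)))) as [T HT].
  exists T. intros t Ht v Hv. destruct (HT t Ht) as [[Hr0 Ht0] [HSt HrLe]].
  specialize (HSt v ltac:(lra)). pose proof (Hhpos v ltac:(lra)). pose proof (Hhpos t Ht0).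
  assert (Hprod : r t * h t <= (L + e) * ((1 + e) * (1 + e) * Rpower theta p * h v))
    by (apply Rmult_le_compat; lra).
  left. apply (Rdiv_lt_iff _ (h v)); [lra |]. nra.
Qed.

Lemma forcing_lower (L theta c : R) : 0 < theta -> lim_infty r L ->
  c < L * Rpower theta p ->
  ultimately (fun t => forall v, theta * t <= v -> c <= r t * h t / h v).
Proof.
  intros Hth HrL Hc. pose proof (Rpower_pos theta p) as Hpow.
  destruct (Rle_or_lt c 0) as [Hc0 | Hc0].
  - destruct (ultimately_and _ _ Hr (ultimately_gt 0)) as [T HT].
    exists T. intros t Ht v Hv. destruct (HT t Ht) as [Hr0 Ht0].
    pose proof (Hhpos v ltac:(nra)). pose proof (Hhpos t Ht0).
    apply Rle_trans with 0; [lra |]. apply Rmult_le_pos; [nra |].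
    left. apply Rinv_0_lt_compat. lra.
  - destruct (small_perturbation
        (fun e => - ((L - e) * Rpower theta p / ((1 + e) * (1 + e)))) (- c))
      as [e [He Hec]]; [reg; lra | lra |].
    set (A := (L - e) * Rpower theta p / ((1 + e) * (1 + e))) in Hec.
    assert (HA : A * ((1 + e) * (1 + e)) = (L - e) * Rpower theta p)
      by (unfold A; field; lra).
    destruct (ultimately_and _ _ (h_ratio_lower theta (1 + e) Hth ltac:(lra))
      (ultimately_and _ _ (ultimately_gt 0) (lim_infty_lower _ _ (L - e) HrL ltac:(nra))))
      as [T HT].
    exists T. intros t Ht v Hv. destruct (HT t Ht) as [Hcmp [Ht0 HrLe]].
    specialize (Hcmp v Hv). pose proof (Hhpos v ltac:(nra)). pose proof (Hhpos t Ht0).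
    assert (HLe : 0 < L - e) by nra.
    assert (HAv : A * h v <= (L - e) * h t)
      by (apply (Rmult_le_reg_r ((1 + e) * (1 + e))); nra).
    left. apply (Rlt_div_iff _ (h v)); [lra |]. nra.
Qed.

Lemma forcing_lower_pinf (theta c : R) : 0 < theta -> lim_infty_pinf r ->
  ultimately (fun t => forall v, theta * t <= v -> c <= r t * h t / h v).
Proof.
  intros Hth Hrinf. pose proof (Rpower_pos theta p) as Hpow.
  set (R0 := 4 * Rabs c / Rpower theta p).
  assert (HR0 : R0 * Rpower theta p = 4 * Rabs c) by (unfold R0; field; lra).
  assert (HR0pos : 0 <= R0) by (pose proof (Rabs_pos c); nra).
  destruct (ultimately_and _ _ (h_ratio_lower theta 2 Hth ltac:(lra))
    (ultimately_and _ _ (ultimately_gt 0) (Hrinf R0))) as [T HT].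
  exists T. intros t Ht v Hv. destruct (HT t Ht) as [Hcmp [Ht0 HrR0]].
  specialize (Hcmp v Hv). pose proof (Hhpos v ltac:(nra)). pose proof (Hhpos t Ht0).
  pose proof (Rle_abs c).
  assert (Habs : Rabs c * h v <= R0 * h t) by nra.
  left. apply (Rlt_div_iff _ (h v)); [lra |]. nra.
Qed.

Lemma growth_rate_finite (L Lam : R) : 0 < p -> 0 <= L -> 0 < Lam ->
  Lam + L * Rpower Lam p = 1 -> lim_infty r L -> lim_infty (fun t => u t / t) Lam.
Proof.
  intros Hp HL HLam Heqn HrL. apply lim_infty_squeeze.
  - intros a Ha. destruct (Rle_or_lt a 0) as [Ha0 | Ha0].
    + destruct (ultimately_and _ _ (ultimately_gt 0) (Hu 0)) as [T HT].
      exists T. intros t Ht. destruct (HT t Ht).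
      assert (0 < u t / t) by (apply Rdiv_lt_0_compat; lra). lra.
    + assert (Hpow : Rpower a p < Rpower Lam p) by (apply Rlt_Rpower_l; lra).
      assert (L * Rpower a p <= L * Rpower Lam p) by (apply Rmult_le_compat_l; lra).
      assert (Hkey : a + L * Rpower a p < 1) by lra.
      destruct (ultimately_and _ _ (ultimately_gt 0)
        (above_line a ((L * Rpower a p + 1 - a) / 2) Ha0 ltac:(lra)
          (forcing_upper L a ((L * Rpower a p + 1 - a) / 2) Ha0 HrL ltac:(lra))))
        as [T HT].
      exists T. intros t Ht. destruct (HT t Ht). apply Rlt_div_iff; lra.
  - intros b Hb.
    assert (Hpow : Rpower Lam p < Rpower b p) by (apply Rlt_Rpower_l; lra).
    assert (L * Rpower Lam p <= L * Rpower b p) by (apply Rmult_le_compat_l; lra).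
    assert (Hkey : 1 < b + L * Rpower b p) by lra.
    destruct (ultimately_and _ _ (ultimately_gt 0)
      (below_line b ((L * Rpower b p + 1 - b) / 2) ltac:(lra) ltac:(lra)
        (forcing_lower L b ((L * Rpower b p + 1 - b) / 2) ltac:(lra) HrL ltac:(lra))))
      as [T HT].
    exists T. intros t Ht. destruct (HT t Ht). apply Rdiv_lt_iff; lra.
Qed.

Lemma growth_rate_infinite : lim_infty_pinf r -> lim_infty (fun t => u t / t) 0.
Proof.
  intros Hrinf. apply lim_infty_squeeze.
  - intros a Ha. destruct (ultimately_and _ _ (ultimately_gt 0) (Hu 0)) as [T HT].
    exists T. intros t Ht. destruct (HT t Ht).
    assert (0 < u t / t) by (apply Rdiv_lt_0_compat; lra). lra.
  - intros b Hb.
    destruct (ultimately_and _ _ (ultimately_gt 0)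
      (below_line b 2 Hb ltac:(lra) (forcing_lower_pinf b 2 Hb Hrinf))) as [T HT].
    exists T. intros t Ht. destruct (HT t Ht). apply Rdiv_lt_iff; lra.
Qed.

End Comparison.

(** * The limiting equation [Lam + L Lam^p = 1] *)

Lemma limit_equation_increasing (L p m m' : R) : 0 <= L -> 0 < p -> 0 < m < m' ->
  m + L * Rpower m p < m' + L * Rpower m' p.
Proof.
  intros HL Hp Hm. assert (Rpower m p < Rpower m' p) by (apply Rlt_Rpower_l; lra).
  assert (L * Rpower m p <= L * Rpower m' p) by (apply Rmult_le_compat_l; lra). lra.
Qed.

Lemma limit_equation_unique (L p m m' : R) : 0 <= L -> 0 < p -> 0 < m -> 0 < m' ->
  m + L * Rpower m p = 1 -> m' + L * Rpower m' p = 1 -> m = m'.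
Proof.
  intros HL Hp Hm Hm' E E'. destruct (Rtotal_order m m') as [Hlt | [Heq | Hgt]]; auto.
  - pose proof (limit_equation_increasing L p m m' HL Hp (conj Hm Hlt)). lra.
  - pose proof (limit_equation_increasing L p m' m HL Hp (conj Hm' Hgt)). lra.
Qed.

Lemma limit_equation_solvable (L p : R) : 0 < L -> 1 <= p ->
  exists Lam, 0 < Lam < 1 /\ Lam + L * Rpower Lam p = 1.
Proof.
  intros HL Hp. set (k := fun m => m + L * Rpower m p - 1).
  set (a := Rmin (1 / 2) (1 / (2 * (L + 1)))).
  assert (Ha : 0 < a <= 1 / 2 /\ a <= 1 / (2 * (L + 1))).
  { pose proof (Rmin_l (1 / 2) (1 / (2 * (L + 1)))).
    pose proof (Rmin_r (1 / 2) (1 / (2 * (L + 1)))).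
    assert (0 < 1 / (2 * (L + 1))) by (apply Rdiv_lt_0_compat; lra).
    unfold a. split; [split; [apply Rmin_glb_lt |] |]; lra. }
  assert (Hap : Rpower a p <= a).
  { rewrite <- (Rpower_1 a) at 2 by lra. unfold Rpower.
    assert (ln a < 0) by (rewrite <- ln_1; apply ln_increasing; lra).
    destruct (Req_dec p 1) as [-> | Hne]; [lra |].
    left. apply exp_increasing. nra. }
  assert (HLa : L * a < 1 / 2).
  { assert (L * a <= L * (1 / (2 * (L + 1)))) by (apply Rmult_le_compat_l; lra).
    assert (L * (1 / (2 * (L + 1))) < 1 / 2); [| lra].
    replace (L * (1 / (2 * (L + 1)))) with (L / (2 * (L + 1))) by (field; lra).
    apply Rdiv_lt_iff; lra. }
  assert (Hka : k a < 0).
  { unfold k. assert (L * Rpower a p <= L * a) by (apply Rmult_le_compat_l; lra). lra. }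
  assert (H1p : Rpower 1 p = 1) by (unfold Rpower; rewrite ln_1, Rmult_0_r; apply exp_0).
  assert (Hk1 : 0 < k 1) by (unfold k; rewrite H1p; lra).
  destruct (Ranalysis5.IVT_interv k a 1) as [z [Hz Hkz]]; try lra.
  - intros m Hm. unfold k.
    apply continuity_pt_minus; [| apply continuity_pt_const; intros ? ?; auto].
    apply continuity_pt_plus; [apply derivable_continuous_pt, derivable_pt_id |].
    apply continuity_pt_scal, derivable_continuous_pt.
    exists (p * Rpower m (p - 1)). apply derivable_pt_lim_power. lra.
  - exists z. unfold k in Hkz. split; [split |]; try lra.
    destruct Hz as [_ [Hz1 | Hz1]]; auto. rewrite Hz1, H1p in Hkz; lra.
Qed.

Lemma limit_equation_iff (L q mu : R) : 0 < mu ->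
  ((1 - mu) * Rpower mu (- q) = L <-> mu + L * Rpower mu q = 1).
Proof.
  intros Hmu. pose proof (Rpower_pos mu q). rewrite Rpower_Ropp.
  split; intros E.
  - rewrite <- E. field. lra.
  - replace (1 - mu) with (L * Rpower mu q) by lra. field. lra.
Qed.

Lemma RVinf_index_unique (h : R -> R) (a b : R) :
  (forall lam, 0 < lam -> lim_infty (fun t => h (lam * t) / h t) (Rpower lam a)) ->
  (forall lam, 0 < lam -> lim_infty (fun t => h (lam * t) / h t) (Rpower lam b)) ->
  a = b.
Proof.
  intros Ha Hb. apply Rpower_2_inj.
  apply (lim_infty_unique (fun t => h (2 * t) / h t)); [apply Ha | apply Hb]; lra.
Qed.

Section Solution.

Variables f g F Finv x phi : R -> R.
Variables xi delta : R.
Hypothesis Hfc : continuity f.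
Hypothesis Hf0 : f 0 = 0.
Hypothesis Hfsign : forall u, u <> 0 -> 0 < u * f u.
Hypothesis Hgpos : forall t, 0 < t -> 0 < g t.
Hypothesis HF : is_F f F.
Hypothesis HFinv : forall t, 0 <= t -> 0 < Finv t /\ F (Finv t) = t.
Hypothesis Hxi : 0 < xi.
Hypothesis Hxc0 : forall eps, 0 < eps -> exists d, 0 < d /\
  forall t, 0 <= t < d -> Rabs (x t - xi) < eps.
Hypothesis Hxd : forall t, 0 < t -> derivable_pt_lim x t (- f (x t) + g t).
Hypothesis Hdelta : 0 < delta.
Hypothesis Hphi : forall u v, 0 < u -> u <= v -> v < delta -> phi u <= phi v.
Hypothesis Hfphi : lim_right0 (fun u => f u / phi u) 1.
Hypothesis Hxlim : lim_infty x 0.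

Lemma f_pos (u : R) : 0 < u -> 0 < f u.
Proof. intros Hu. specialize (Hfsign u ltac:(lra)). nra. Qed.

Lemma f_nonpos (u : R) : u <= 0 -> f u <= 0.
Proof.
  intros Hu. destruct (Req_dec u 0) as [-> | Hne]; [lra |].
  specialize (Hfsign u Hne). nra.
Qed.

Let HFdec : forall a b, 0 < a -> a < b -> F b < F a := F_decreasing f F Hfc f_pos HF.

(* The solution stays positive: where [x <= 0], [x' = - f(x) + g > 0]. *)
Lemma solution_pos (t : R) : 0 <= t -> 0 < x t.
Proof.
  intros Ht. destruct (Hxc0 (xi / 2) ltac:(lra)) as [d [Hd Hxd0]].
  assert (Hsmall : forall s, 0 <= s < d -> 0 < x s)
    by (intros s Hs; specialize (Hxd0 s Hs); apply Rabs_def2 in Hxd0; lra).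
  destruct (Rlt_or_le t d) as [Htd | Htd]; [apply Hsmall; lra |].
  apply (positivity_persists x (fun s => - f (x s) + g s) (d / 2) t); [lra | | |].
  - intros c Hc. apply Hxd. lra.
  - apply Hsmall. lra.
  - intros c Hc Hxc. pose proof (f_nonpos _ Hxc). pose proof (Hgpos c ltac:(lra)). lra.
Qed.

Lemma F_solution_derivative (t : R) : 0 < t ->
  derivable_pt_lim (fun s => F (x s)) t (- / f (x t) * (- f (x t) + g t)).
Proof.
  intros Ht. apply (derivable_pt_lim_comp x F t); [apply Hxd; auto |].
  apply (F_derivative f F Hfc f_pos HF), solution_pos. lra.
Qed.

Lemma F_solution_to_infty : lim_infty_pinf (fun t => F (x t)).
Proof.
  intros M. destruct (F_blowup F Finv HFdec HFinv M) as [d [Hd HFd]].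
  destruct (Hxlim d Hd) as [T HT]. exists (Rmax T 0). intros t Ht.
  pose proof (Rmax_l T 0). pose proof (Rmax_r T 0).
  specialize (HT t ltac:(lra)). rewrite Rminus_0_r in HT. apply Rabs_def2 in HT.
  apply HFd. split; [apply solution_pos |]; lra.
Qed.

Lemma F_solution_equation : ultimately (fun t =>
  - / f (x t) * (- f (x t) + g t)
  = 1 - g t / f (Finv t) * f (Finv t) / f (Finv (F (x t)))).
Proof.
  destruct (ultimately_and _ _ (ultimately_gt 0) (F_solution_to_infty 0)) as [T HT].
  exists T. intros t Ht. destruct (HT t Ht) as [Ht0 HFx].
  pose proof (solution_pos t ltac:(lra)) as Hxt.
  rewrite (Finv_F F Finv HFdec HFinv (x t) Hxt ltac:(lra)).
  pose proof (f_pos _ Hxt). pose proof (f_pos (Finv t) ltac:(apply HFinv; lra)).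
  field. lra.
Qed.

Lemma f_Finv_almost_decreasing : almost_decreasing (fun s => f (Finv s)).
Proof.
  apply almost_decreasing_comp.
  - apply (almost_increasing_of_equiv f phi delta); auto. apply f_pos.
  - apply (Finv_nonincreasing F Finv HFdec HFinv).
  - apply (Finv_tends_to_0plus F Finv HFdec HFinv).
Qed.

Lemma f_Finv_index :
  (exists beta, 1 < beta /\ RV0 beta f) \/ RVinf (-1) (fun t => f (Finv t)) ->
  exists p, 1 <= p /\
    (forall lam, 0 < lam ->
       lim_infty (fun t => f (Finv (lam * t)) / f (Finv t)) (Rpower lam (- p))) /\
    (forall beta, 1 < beta -> RV0 beta f -> p = beta / (beta - 1)) /\
    (RVinf (-1) (fun t => f (Finv t)) -> p = 1).
Proof.
  assert (HcaseI : forall beta, 1 < beta -> RV0 beta f ->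
            RVinf (- (beta / (beta - 1))) (fun t => f (Finv t))).
  { intros beta Hb Hfb. apply (f_Finv_regular_variation f F Finv); auto.
    - apply f_pos.
    - apply (F_derivative f F Hfc f_pos HF).
    - apply (almost_increasing_of_equiv f phi delta); auto. apply f_pos. }
  intros [[beta [Hb Hfb]] | HII].
  - exists (beta / (beta - 1)). destruct (HcaseI beta Hb Hfb) as [_ Hrv].
    split; [| split; [| split]].
    + apply Rle_trans with 1; [lra |]. left. apply Rlt_div_iff; lra.
    + auto.
    + intros beta' Hb' Hfb'. destruct (HcaseI beta' Hb' Hfb') as [_ Hrv'].
      pose proof (RVinf_index_unique _ _ _ Hrv Hrv'). lra.
    + intros [_ Hrv']. pose proof (RVinf_index_unique _ _ _ Hrv Hrv'). lra.
  - destruct HII as [_ Hrv]. exists 1. split; [lra | split; [auto | split]].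
    + intros beta Hb Hfb. destruct (HcaseI beta Hb Hfb) as [_ Hrv'].
      pose proof (RVinf_index_unique _ _ _ Hrv Hrv'). lra.
    + auto.
Qed.

Lemma solution_growth (p : R) : 0 < p ->
  (forall lam, 0 < lam ->
     lim_infty (fun t => f (Finv (lam * t)) / f (Finv t)) (Rpower lam (- p))) ->
  (forall L Lam, 0 <= L -> 0 < Lam -> Lam + L * Rpower Lam p = 1 ->
     lim_infty (fun t => g t / f (Finv t)) L -> lim_infty (fun t => F (x t) / t) Lam) /\
  (lim_infty_pinf (fun t => g t / f (Finv t)) -> lim_infty (fun t => F (x t) / t) 0).
Proof.
  intros Hp Hrv.
  assert (Hder : ultimately (fun t => derivable_pt_lim (fun s => F (x s)) t
                                        (- / f (x t) * (- f (x t) + g t))))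
    by (exists 0; apply F_solution_derivative).
  assert (Hr : ultimately (fun t => 0 <= g t / f (Finv t))).
  { exists 0. intros t Ht. left.
    apply Rdiv_lt_0_compat; [apply Hgpos; auto | apply f_pos, HFinv; lra]. }
  assert (Hhpos : forall s, 0 < s -> 0 < f (Finv s)) by (intros s Hs; apply f_pos, HFinv; lra).
  split.
  - intros L Lam HL HLam Heqn HrL.
    apply (growth_rate_finite _ _ _ _ p Hder F_solution_equation F_solution_to_infty Hr Hhpos
             f_Finv_almost_decreasing Hrv L Lam); auto.
  - apply (growth_rate_infinite _ _ _ _ p Hder F_solution_equation F_solution_to_infty Hhpos
             f_Finv_almost_decreasing Hrv).
Qed.

End Solution.

Theorem theorem5
  (f g F Finv x phi : R -> R) (xi delta : R)
  (* standing assumptions *)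
  (Hfc : continuity f) (Hflip : loc_lipschitz f) (Hf0 : f 0 = 0)
  (Hfsign : forall u, u <> 0 -> 0 < u * f u)
  (Hgc : forall t, 0 < t -> continuity_pt g t)
  (Hgc0 : forall eps, 0 < eps -> exists d, 0 < d /\
            forall t, 0 <= t < d -> Rabs (g t - g 0) < eps)
  (Hgpos : forall t, 0 < t -> 0 < g t)
  (Hxi : 0 < xi)
  (HF : is_F f F)
  (* F^{-1}, defined on [0,oo) (with values in (0,1]) *)
  (HFinv : forall t, 0 <= t -> 0 < Finv t /\ F (Finv t) = t)
  (* x is the continuous solution of x' = -f(x) + g, x(0) = xi *)
  (Hx0 : x 0 = xi)
  (Hxc0 : forall eps, 0 < eps -> exists d, 0 < d /\
            forall t, 0 <= t < d -> Rabs (x t - xi) < eps)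
  (Hxd : forall t, 0 < t -> derivable_pt_lim x t (- f (x t) + g t))
  (* regular variation hypothesis *)
  (HRV : (exists beta, 1 < beta /\ RV0 beta f) \/ RVinf (-1) (fun t => f (Finv t)))
  (* phi increasing on (0,delta), f ~ phi at 0+ *)
  (Hdelta : 0 < delta)
  (Hphi : forall u v, 0 < u -> u <= v -> v < delta -> phi u <= phi v)
  (Hfphi : lim_right0 (fun u => f u / phi u) 1)
  (* x(t) -> 0 *)
  (Hxlim : lim_infty x 0) :
  let ratio := fun t => g t / f (Finv t) in
  let Fx := fun t => F (x t) / t in
  (* (i) L = 0 *)
  (lim_infty ratio 0 -> lim_infty Fx 1) /\
  (* (ii) L in (0,oo) *)
  (forall L, 0 < L -> lim_infty ratio L ->
     exists Lam, 0 < Lam < 1 /\ lim_infty Fx Lam /\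
       (forall beta, 1 < beta -> RV0 beta f ->
          (1 - Lam) * Rpower Lam (- (beta / (beta - 1))) = L /\
          (forall mu, 0 < mu < 1 ->
             (1 - mu) * Rpower mu (- (beta / (beta - 1))) = L -> mu = Lam)) /\
       (RVinf (-1) (fun t => f (Finv t)) -> Lam = 1 / (1 + L))) /\
  (* (iii) L = oo *)
  (lim_infty_pinf ratio -> lim_infty Fx 0).
Proof.
  intros ratio Fx.
  destruct (f_Finv_index f F Finv phi delta Hfc Hfsign HF HFinv Hdelta Hphi Hfphi HRV)
    as [p [Hp [Hrv [HpI HpII]]]].
  destruct (solution_growth f g F Finv x phi xi delta Hfc Hf0 Hfsign Hgpos HF HFinv Hxi
              Hxc0 Hxd Hdelta Hphi Hfphi Hxlim p ltac:(lra) Hrv) as [Hfinite Hinfinite].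
  split; [| split; [| exact Hinfinite]].
  -
    intros Hr. apply (Hfinite 0 1); [lra | lra | rewrite Rmult_0_l; lra | exact Hr].
  -
    intros L HL Hr. destruct (limit_equation_solvable L p HL Hp) as [Lam [HLam Heqn]].
    exists Lam. split; [exact HLam |].
    split; [apply (Hfinite L Lam); auto; lra |]. split.
    + intros beta Hb Hfb. rewrite <- (HpI beta Hb Hfb). split.
      * apply limit_equation_iff; [lra | exact Heqn].
      * intros mu Hmu Hmueq. apply (limit_equation_unique L p); try lra.
        apply limit_equation_iff; [lra | exact Hmueq].
    + intros HII. rewrite (HpII HII), Rpower_1 in Heqn by lra.
      apply (Rmult_eq_reg_r (1 + L)); [| lra].
      unfold Rdiv. rewrite Rmult_1_l, Rinv_l by lra. lra.
Qed.
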